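(* Let $p\ge1$. Every two-agent randomized mechanism that is strategyproof, shift and scale invariant, symmetric, and satisfies $\mathbb{P}(f({\bf x})\in[\min(x_1,x_2),\max(x_1,x_2)])=1$ for every profile ${\bf x}$ has approximation ratio at least $\tfrac12\big(2^{1-\frac1p}+1\big)$ with respect to the $L_p$ social cost.
   Context: Two-agent randomized mechanisms map profiles ${\bf x}=(x_1,x_2)$ to distributions on $\mathbb{R}$ (identified with random variables); agent cost is expected distance to the facility; strategyproof means no agent can reduce his expected cost by misreporting. Social cost $sc({\bf x},\pi)=\mathbb{E}_{y\sim\pi}(|x_1-y|^p+|x_2-y|^p)^{1/p}$; approximation ratio $\sup_{\bf x}sc({\bf x},f({\bf x}))/\min_y sc({\bf x},y)$ (with $0/0=1$, $c/0=\infty$ for $c>0$). $m_{\bf x}=(x_1+x_2)/2$. $f$ is shift and scale invariant if for every profile with $x_1\le x_2$ and every $c\in\mathbb{R}$: (1) $f(x_1+c,x_2+c)$ is distributed as $f({\bf x})+c$; (2) if $c\ge0$, $f(cx_1,cx_2)$ is distributed as $c\,f({\bf x})$, and if $c<0$, $f(cx_1,cx_2)$ is distributed as $-c\,f(-x_2,-x_1)$. $f$ is symmetric if $\mathbb{P}(f({\bf x})\ge m_{\bf x}+y)=\mathbb{P}(f({\bf x})\le m_{\bf x}-y)$ for all profiles and all $y\in\mathbb{R}$. *)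

From Stdlib Require Import Reals Lra ClassicalEpsilon.
Open Scope R_scope.

(* A probability distribution on R with bounded support, represented by its
   quantile function Q : [0,1] -> R (nondecreasing): the distribution is the
   law of Q(U) with U uniform on [0,1]. *)
Record dist := Dist {
  qf : R -> R;
  qf_mono : forall u v, 0 <= u -> u <= v -> v <= 1 -> qf u <= qf v
}.

(* Riemann integral over [0,1] (defaults to 0 if not Riemann integrable;
   all integrands used below are integrable). *)
Definition Rint01 (h : R -> R) : R :=
  epsilon (inhabits 0)
    (fun I => exists pr : Riemann_integrable h 0 1, RiemannInt pr = I).

Definition Expect (d : dist) (g : R -> R) : R :=
  Rint01 (fun u => g (qf d u)).

Definition Prob (d : dist) (P : R -> Prop) : R :=
  Expect d (fun y => if excluded_middle_informative (P y) then 1 else 0).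

Definition mechanism := R -> R -> dist.

Definition agent_cost (xi : R) (d : dist) : R := Expect d (fun y => Rabs (xi - y)).

Definition strategyproof (f : mechanism) : Prop :=
  (forall x1 x2 x1', agent_cost x1 (f x1 x2) <= agent_cost x1 (f x1' x2)) /\
  (forall x1 x2 x2', agent_cost x2 (f x1 x2) <= agent_cost x2 (f x1 x2')).

Definition distributed_as (d1 : dist) (h : R -> R) (d2 : dist) : Prop :=
  forall t, Prob d1 (fun y => y <= t) = Prob d2 (fun y => h y <= t).

Definition shift_scale_invariant (f : mechanism) : Prop :=
  forall x1 x2 c, x1 <= x2 ->
    distributed_as (f (x1 + c) (x2 + c)) (fun y => y + c) (f x1 x2) /\
    (0 <= c -> distributed_as (f (c * x1) (c * x2)) (fun y => c * y) (f x1 x2)) /\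
    (c < 0 -> distributed_as (f (c * x1) (c * x2)) (fun y => - c * y) (f (- x2) (- x1))).

Definition symmetric (f : mechanism) : Prop :=
  forall x1 x2 y,
    Prob (f x1 x2) (fun z => (x1 + x2) / 2 + y <= z) =
    Prob (f x1 x2) (fun z => z <= (x1 + x2) / 2 - y).

(* a^b for a >= 0, with 0^b = 0 (b > 0 here). *)
Definition rpow (a b : R) : R := if Rle_dec a 0 then 0 else Rpower a b.

Definition lpnorm (p a b : R) : R :=
  rpow (rpow (Rabs a) p + rpow (Rabs b) p) (1 / p).

Definition sc_det (p x1 x2 y : R) : R := lpnorm p (x1 - y) (x2 - y).

Definition sc (p x1 x2 : R) (d : dist) : R := Expect d (fun y => sc_det p x1 x2 y).

(* Optimal social cost min_y sc(x,y) (the minimum is attained). *)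
Definition opt (p x1 x2 : R) : R :=
  epsilon (inhabits 0)
    (fun m => (exists y, sc_det p x1 x2 y = m) /\ forall z, m <= sc_det p x1 x2 z).

(* "ratio at profile x exceeds c'" with conventions 0/0 = 1, c/0 = +oo. *)
Definition ratio_exceeds (p : R) (f : mechanism) (x1 x2 c' : R) : Prop :=
  let s := sc p x1 x2 (f x1 x2) in
  let o := opt p x1 x2 in
  if Req_dec_T o 0 then (if Req_dec_T s 0 then 1 > c' else True)
  else s / o > c'.

Definition approx_ratio_ge (p : R) (f : mechanism) (c : R) : Prop :=
  forall c', c' < c -> exists x1 x2, ratio_exceeds p f x1 x2 c'.

(* Fix the profile (0,1) and let Y follow f(0,1), so that Y lies in [0,1] and is symmetric
   about 1/2.  By shift and scale invariance, agent 2 reporting 1 + e moves the facility to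
   (1 + e) Y, and agent 1 reporting -e moves it to (1 + e) Y - e.  Comparing expected distances,
   strategyproofness gives E Y <= 2 P(Y >= 1 - e) and 1 <= E Y + 2 P(Y <= e); with symmetry,
   P(Y <= e) >= 1/4 for every e > 0.  Hence Y <= 0 on the lowest quarter and Y >= 1 on the
   highest quarter of its quantiles, where the social cost is at least 1, while it is always at
   least the optimum 2^(1/p - 1).  The expected cost is thus at least (1 + 2^(1/p - 1)) / 2,
   i.e. the ratio is at least (2^(1 - 1/p) + 1) / 2.
   Agent costs are transported along "distributed as" through the layer-cake formula, which
   expresses E|x - Y| by the CDF of Y alone. *)

From Stdlib Require Import Reals RList Lra Lia ClassicalEpsilon FunctionalExtensionality.
Open Scope R_scope.

(** * Riemann integrability of monotone functions *)

Lemma adapted_couple_ext (f g : R -> R) a b l lf :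
  adapted_couple f a b l lf ->
  (forall t, Rmin a b < t < Rmax a b -> f t = g t) ->
  adapted_couple g a b l lf.
Proof.
  intros [Hord [Hfirst [Hlast [Hlen Hconst]]]] Efg.
  repeat split; auto.
  intros i Hi x Hx. rewrite <- Efg; [exact (Hconst i Hi x Hx)|].
  pose proof (proj1 (RList_P6 l) Hord) as Hsorted.
  split.
  - rewrite <- Hfirst. apply Rle_lt_trans with (pos_Rl l i); [apply Hsorted; lia | apply Hx].
  - rewrite <- Hlast. apply Rlt_le_trans with (pos_Rl l (S i)); [apply Hx | apply Hsorted; lia].
Qed.

Definition IsStepFun_ext (f g : R -> R) a b (pr : IsStepFun f a b)
  (Efg : forall t, Rmin a b < t < Rmax a b -> f t = g t) : IsStepFun g a b :=
  existT _ (projT1 pr)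
    (existT _ (projT1 (projT2 pr)) (adapted_couple_ext _ _ _ _ _ _ (projT2 (projT2 pr)) Efg)).

Lemma RiemannInt_SF_ext (f g : R -> R) a b (pr : IsStepFun f a b) Efg :
  RiemannInt_SF (mkStepFun (IsStepFun_ext f g a b pr Efg)) = RiemannInt_SF (mkStepFun pr).
Proof. destruct pr as [l [lf Hl]]; reflexivity. Qed.

Lemma StepFun_glue {a m b : R} (f1 : StepFun a m) (f2 : StepFun m b) : a <= m -> m <= b ->
  { g : StepFun a b | (forall t, t <= m -> g t = f1 t) /\ (forall t, m < t -> g t = f2 t) /\
      RiemannInt_SF g = RiemannInt_SF f1 + RiemannInt_SF f2 }.
Proof.
  intros Ham Hmb.
  set (gf := fun t => if Rle_dec t m then f1 t else f2 t).
  assert (E1 : forall t, Rmin a m < t < Rmax a m -> f1 t = gf t).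
  { intros t Ht. rewrite Rmax_right in Ht by lra.
    unfold gf. destruct Rle_dec; [reflexivity | lra]. }
  assert (E2 : forall t, Rmin m b < t < Rmax m b -> f2 t = gf t).
  { intros t Ht. rewrite Rmin_left in Ht by lra.
    unfold gf. destruct Rle_dec; [lra | reflexivity]. }
  set (pr1 := IsStepFun_ext _ _ _ _ (pre f1) E1).
  set (pr2 := IsStepFun_ext _ _ _ _ (pre f2) E2).
  exists (mkStepFun (StepFun_P41 Ham Hmb pr1 pr2)); simpl; split; [|split].
  - intros t Ht. unfold gf. destruct Rle_dec; [reflexivity | lra].
  - intros t Ht. unfold gf. destruct Rle_dec; [lra | reflexivity].
  - rewrite <- (StepFun_P43 pr1 pr2). unfold pr1, pr2. rewrite !RiemannInt_SF_ext.
    destruct f1, f2; reflexivity.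
Qed.

(* Bisection halves the sum of (length) * (increment of h) over the pieces. *)
Lemma increasing_step_approx (h : R -> R) (n : nat) : increasing h ->
  forall a b, a <= b ->
  { phi : StepFun a b & { psi : StepFun a b |
      (forall t, a <= t <= b -> Rabs (h t - phi t) <= psi t) /\
      RiemannInt_SF psi <= (b - a) * (h b - h a) / 2 ^ n } }.
Proof.
  intros Hh. induction n as [|n IH]; intros a b Hab.
  - exists (mkStepFun (StepFun_P4 a b (h a))), (mkStepFun (StepFun_P4 a b (h b - h a))).
    split.
    + intros t Ht. simpl. unfold fct_cte.
      assert (h a <= h t) by (apply Hh; lra). assert (h t <= h b) by (apply Hh; lra).
      rewrite Rabs_right; lra.
    + rewrite StepFun_P18. simpl. lra.
  - set (m := (a + b) / 2).
    destruct (IH a m ltac:(unfold m; lra)) as [phi1 [psi1 [Err1 Int1]]].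
    destruct (IH m b ltac:(unfold m; lra)) as [phi2 [psi2 [Err2 Int2]]].
    destruct (StepFun_glue phi1 phi2) as [phi [Phi1 [Phi2 _]]]; try (unfold m; lra).
    destruct (StepFun_glue psi1 psi2) as [psi [Psi1 [Psi2 Psi]]]; try (unfold m; lra).
    exists phi, psi. split.
    + intros t Ht. destruct (Rle_dec t m).
      * rewrite Phi1, Psi1 by lra. apply Err1; lra.
      * rewrite Phi2, Psi2 by lra. apply Err2; lra.
    + assert (Split : (b - a) * (h b - h a) / 2 ^ S n =
                      (m - a) * (h m - h a) / 2 ^ n + (b - m) * (h b - h m) / 2 ^ n).
      { unfold m. simpl. field. apply pow_nonzero. lra. }
      lra.
Qed.

Lemma Riemann_integrable_increasing (h : R -> R) a b :
  increasing h -> a <= b -> Riemann_integrable h a b.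
Proof.
  intros Hh Hab eps.
  set (K := (b - a) * (h b - h a)).
  assert (HK : 0 <= K) by (apply Rmult_le_pos; [lra | pose proof (Hh a b Hab); lra]).
  destruct (constructive_indefinite_description _ (INR_archimed eps K (cond_pos eps)))
    as [n Hn].
  destruct (increasing_step_approx h n Hh a b Hab) as [phi [psi [Err Int]]].
  exists phi, psi. split.
  - intros t Ht. rewrite Rmin_left, Rmax_right in Ht by lra. auto.
  - assert (Hpsi : 0 <= RiemannInt_SF psi).
    { rewrite <- (Rmult_0_l (b - a)), <- (StepFun_P18 a b 0).
      apply StepFun_P37; [assumption|]. intros t Ht. simpl. unfold fct_cte.
      apply Rle_trans with (Rabs (h t - phi t)); [apply Rabs_pos | apply Err; lra]. }
    assert (Hpow : INR n <= 2 ^ n).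
    { clear. induction n as [|n IH]; [simpl; lra|]. rewrite S_INR. simpl.
      pose proof (pow_R1_Rle 2 n ltac:(lra)). lra. }
    assert (K / 2 ^ n < eps).
    { apply Rmult_lt_reg_r with (2 ^ n); [apply pow_lt; lra|].
      unfold Rdiv. rewrite Rmult_assoc, Rinv_l, Rmult_1_r by (apply pow_nonzero; lra).
      pose proof (cond_pos eps). nra. }
    rewrite Rabs_right; unfold K in *; lra.
Qed.

(** * Expectations as integrals of quantile functions *)

Lemma Rint01_RiemannInt g (pr : Riemann_integrable g 0 1) : Rint01 g = RiemannInt pr.
Proof.
  unfold Rint01.
  destruct (epsilon_spec (inhabits 0)
    (fun I => exists pr : Riemann_integrable g 0 1, RiemannInt pr = I)
    (ex_intro _ _ (ex_intro _ pr eq_refl))) as [pr' <-].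
  apply RiemannInt_P5.
Qed.

Lemma Rint01_lin g1 g2 l : Riemann_integrable g1 0 1 -> Riemann_integrable g2 0 1 ->
  Rint01 (fun u => g1 u + l * g2 u) = Rint01 g1 + l * Rint01 g2.
Proof.
  intros pr1 pr2.
  rewrite (Rint01_RiemannInt _ (RiemannInt_P10 l pr1 pr2)),
    (Rint01_RiemannInt _ pr1), (Rint01_RiemannInt _ pr2).
  apply RiemannInt_P13.
Qed.

Lemma Rint01_le g1 g2 : Riemann_integrable g1 0 1 -> Riemann_integrable g2 0 1 ->
  (forall u, 0 < u < 1 -> g1 u <= g2 u) -> Rint01 g1 <= Rint01 g2.
Proof.
  intros pr1 pr2 Hle. rewrite (Rint01_RiemannInt _ pr1), (Rint01_RiemannInt _ pr2).
  apply RiemannInt_P19; auto; lra.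
Qed.

Lemma Rint01_const c : Rint01 (fun _ => c) = c.
Proof.
  change (Rint01 (fct_cte c) = c).
  rewrite (Rint01_RiemannInt _ (RiemannInt_P14 0 1 c)), RiemannInt_P15. ring.
Qed.

Lemma RiemannInt_ge_const g a b A (pr : Riemann_integrable g a b) : a <= b ->
  (forall u, a < u < b -> A <= g u) -> A * (b - a) <= RiemannInt pr.
Proof.
  intros Hab Hge. rewrite <- (RiemannInt_P15 (RiemannInt_P14 a b A)).
  apply RiemannInt_P19; auto.
Qed.

Lemma Rint01_ge_piecewise g a b A B C : Riemann_integrable g 0 1 ->
  0 <= a -> a <= b -> b <= 1 ->
  (forall u, 0 < u < a -> A <= g u) -> (forall u, a < u < b -> B <= g u) ->
  (forall u, b < u < 1 -> C <= g u) ->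
  A * a + B * (b - a) + C * (1 - b) <= Rint01 g.
Proof.
  intros pr Ha Hab Hb HA HB HC.
  rewrite (Rint01_RiemannInt _ pr).
  set (pr0b := RiemannInt_P22 pr (conj (Rle_trans _ _ _ Ha Hab) Hb)).
  set (prb1 := RiemannInt_P23 pr (conj (Rle_trans _ _ _ Ha Hab) Hb)).
  set (pr0a := RiemannInt_P22 pr0b (conj Ha Hab)).
  set (prab := RiemannInt_P23 pr0b (conj Ha Hab)).
  rewrite <- (RiemannInt_P26 pr0b prb1 pr), <- (RiemannInt_P26 pr0a prab pr0b).
  pose proof (RiemannInt_ge_const _ _ _ _ pr0a Ha HA).
  pose proof (RiemannInt_ge_const _ _ _ _ prab Hab HB).
  pose proof (RiemannInt_ge_const _ _ _ _ prb1 Hb HC).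
  lra.
Qed.

Lemma Rint01_le_piecewise g a b A B C : Riemann_integrable g 0 1 ->
  0 <= a -> a <= b -> b <= 1 ->
  (forall u, 0 < u < a -> g u <= A) -> (forall u, a < u < b -> g u <= B) ->
  (forall u, b < u < 1 -> g u <= C) ->
  Rint01 g <= A * a + B * (b - a) + C * (1 - b).
Proof.
  intros pr Ha Hab Hb HA HB HC.
  assert (Hopp : Rint01 (fun u => 0 + -1 * g u) = - Rint01 g).
  { rewrite Rint01_lin, Rint01_const; [ring | apply RiemannInt_P14 | exact pr]. }
  assert (Hge := Rint01_ge_piecewise (fun u => 0 + -1 * g u) a b (- A) (- B) (- C)
    (RiemannInt_P10 (-1) (RiemannInt_P14 0 1 0) pr) Ha Hab Hb).
  rewrite Hopp in Hge.
  enough (- A * a + - B * (b - a) + - C * (1 - b) <= - Rint01 g) by lra.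
  apply Hge; intros u Hu; [specialize (HA u Hu) | specialize (HB u Hu) | specialize (HC u Hu)];
    lra.
Qed.

Definition indicator (P : R -> Prop) (y : R) : R :=
  if excluded_middle_informative (P y) then 1 else 0.

Lemma indicator_01 P y : 0 <= indicator P y <= 1.
Proof. unfold indicator; destruct excluded_middle_informative; lra. Qed.

Lemma increasing_id : increasing (fun y => y).
Proof. intros x y H; exact H. Qed.

Section Expectation.

Variable d : dist.

Definition qf_integrable (g : R -> R) : Type := Riemann_integrable (fun u => g (qf d u)) 0 1.

Lemma qf_integrable_increasing g : increasing g -> qf_integrable g.
Proof.
  intros Hg.
  set (clamp := fun u => Rmax 0 (Rmin u 1)).
  apply Riemann_integrable_ext with (fun u => g (qf d (clamp u))).
  - intros u Hu. rewrite Rmin_left, Rmax_right in Hu by lra.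
    unfold clamp. rewrite Rmin_left, Rmax_right by lra. reflexivity.
  - apply Riemann_integrable_increasing; [|lra].
    intros u v Huv. apply Hg, qf_mono; unfold clamp, Rmax, Rmin;
      repeat destruct Rle_dec; lra.
Qed.

Lemma qf_integrable_decreasing g : decreasing g -> qf_integrable g.
Proof.
  intros Hg. apply Riemann_integrable_ext with (fun u => - - g (qf d u)).
  - intros; ring.
  - apply Riemann_integrable_Ropp, (qf_integrable_increasing (fun y => - g y)).
    intros x y Hxy. specialize (Hg x y Hxy). lra.
Qed.

Lemma qf_integrable_lin g1 g2 l : qf_integrable g1 -> qf_integrable g2 ->
  qf_integrable (fun y => g1 y + l * g2 y).
Proof. apply RiemannInt_P10. Qed.

Lemma qf_integrable_const c : qf_integrable (fun _ => c).
Proof. exact (RiemannInt_P14 0 1 c). Qed.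

Lemma qf_integrable_ext g1 g2 : (forall y, g1 y = g2 y) -> qf_integrable g1 -> qf_integrable g2.
Proof. intros E. apply Riemann_integrable_ext. intros; apply E. Qed.

Lemma qf_integrable_monotone_sum g g1 g2 : increasing g1 -> decreasing g2 ->
  (forall y, g y = g1 y + g2 y) -> qf_integrable g.
Proof.
  intros H1 H2 E. apply qf_integrable_ext with (fun y => g1 y + 1 * g2 y).
  - intros y. rewrite E. ring.
  - apply qf_integrable_lin; [apply qf_integrable_increasing | apply qf_integrable_decreasing];
      assumption.
Qed.

Lemma qf_integrable_abs x psi : increasing psi -> qf_integrable (fun y => Rabs (x - psi y)).
Proof.
  intros Hpsi.
  apply (qf_integrable_monotone_sum _ (fun y => Rmax (psi y - x) 0) (fun y => Rmax (x - psi y) 0)).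
  - intros a b Hab. pose proof (Hpsi a b Hab). unfold Rmax; repeat destruct Rle_dec; lra.
  - intros a b Hab. pose proof (Hpsi a b Hab). unfold Rmax; repeat destruct Rle_dec; lra.
  - intros y. unfold Rmax, Rabs; repeat destruct Rle_dec; repeat destruct Rcase_abs; lra.
Qed.

Lemma qf_integrable_indicator_le t psi : increasing psi ->
  qf_integrable (indicator (fun y => psi y <= t)).
Proof.
  intros Hpsi. apply qf_integrable_decreasing. intros a b Hab. pose proof (Hpsi a b Hab).
  unfold indicator; repeat destruct excluded_middle_informative; lra.
Qed.

Lemma qf_integrable_indicator_ge t : qf_integrable (indicator (fun y => t <= y)).
Proof.
  apply qf_integrable_increasing. intros a b Hab.
  unfold indicator; repeat destruct excluded_middle_informative; lra.
Qed.

Lemma Expect_lin g1 g2 l : qf_integrable g1 -> qf_integrable g2 ->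
  Expect d (fun y => g1 y + l * g2 y) = Expect d g1 + l * Expect d g2.
Proof. apply Rint01_lin. Qed.

Lemma Expect_const c : Expect d (fun _ => c) = c.
Proof. exact (Rint01_const c). Qed.

Lemma Expect_le g1 g2 : qf_integrable g1 -> qf_integrable g2 ->
  (forall u, 0 < u < 1 -> g1 (qf d u) <= g2 (qf d u)) -> Expect d g1 <= Expect d g2.
Proof. apply Rint01_le. Qed.

Lemma Prob_ext (P P' : R -> Prop) : (forall y, P y <-> P' y) -> Prob d P = Prob d P'.
Proof.
  intros E. unfold Prob. f_equal. extensionality y.
  destruct (excluded_middle_informative (P y)), (excluded_middle_informative (P' y));
    firstorder.
Qed.

Definition supported_in (a b : R) : Prop := forall u, 0 < u < 1 -> a <= qf d u <= b.

Lemma Expect_le_on_support a b g1 g2 : supported_in a b ->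
  qf_integrable g1 -> qf_integrable g2 ->
  (forall y, a <= y <= b -> g1 y <= g2 y) -> Expect d g1 <= Expect d g2.
Proof. intros Hsupp I1 I2 Hle. apply Expect_le; auto. Qed.

Lemma Expect_le_of_nonpos_above g u : qf_integrable g -> 0 < u < 1 ->
  (forall y, g y <= 1) -> (forall y, qf d u <= y -> g y <= 0) -> Expect d g <= u.
Proof.
  intros Ig Hu Hle1 Hnonpos.
  apply Rle_trans with (1 * u + 0 * (u - u) + 0 * (1 - u)); [|lra].
  apply Rint01_le_piecewise; [assumption | lra | lra | lra | | |]; intros w Hw.
  - apply Hle1.
  - lra.
  - apply Hnonpos, qf_mono; lra.
Qed.

Lemma Expect_le_of_nonpos_below g u : qf_integrable g -> 0 < u < 1 ->
  (forall y, g y <= 1) -> (forall y, y <= qf d u -> g y <= 0) -> Expect d g <= 1 - u.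
Proof.
  intros Ig Hu Hle1 Hnonpos.
  apply Rle_trans with (0 * u + 0 * (u - u) + 1 * (1 - u)); [|lra].
  apply Rint01_le_piecewise; [assumption | lra | lra | lra | | |]; intros w Hw.
  - apply Hnonpos, qf_mono; lra.
  - lra.
  - apply Hle1.
Qed.

Lemma supported_in_of_Prob a b : a <= b -> Prob d (fun y => a <= y <= b) = 1 -> supported_in a b.
Proof.
  intros Hab Hprob u Hu.
  assert (Iab : qf_integrable (indicator (fun y => a <= y <= b))).
  { apply (qf_integrable_monotone_sum _ (indicator (fun y => a <= y))
                                        (fun y => - indicator (fun y => b < y) y)).
    - intros x y Hxy. unfold indicator; repeat destruct excluded_middle_informative; lra.
    - intros x y Hxy. unfold indicator; repeat destruct excluded_middle_informative; lra.
    - intros y. unfold indicator; repeat destruct excluded_middle_informative; lra. }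
  assert (Hle1 : forall y, indicator (fun y => a <= y <= b) y <= 1)
    by (intros y; apply indicator_01).
  split.
  - destruct (Rle_dec a (qf d u)) as [|Hlt]; [assumption|].
    enough (Prob d (fun y => a <= y <= b) <= 1 - u) by lra.
    apply Expect_le_of_nonpos_below; auto.
    intros y Hy. unfold indicator; destruct excluded_middle_informative; lra.
  - destruct (Rle_dec (qf d u) b) as [|Hlt]; [assumption|].
    enough (Prob d (fun y => a <= y <= b) <= u) by lra.
    apply Expect_le_of_nonpos_above; auto.
    intros y Hy. unfold indicator; destruct excluded_middle_informative; lra.
Qed.

Definition mean : R := Expect d (fun y => y).

Lemma qf_integrable_affine a b : qf_integrable (fun y => a + b * y).
Proof.
  apply qf_integrable_lin;
    [apply qf_integrable_const | apply qf_integrable_increasing, increasing_id].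
Qed.

Lemma Expect_affine a b : Expect d (fun y => a + b * y) = a + b * mean.
Proof.
  rewrite Expect_lin, Expect_const;
    [reflexivity | apply qf_integrable_const | apply qf_integrable_increasing, increasing_id].
Qed.

Lemma Expect_affine_indicator (P : R -> Prop) a b k : qf_integrable (indicator P) ->
  Expect d (fun y => a + b * y + k * indicator P y) = a + b * mean + k * Prob d P.
Proof.
  intros IP.
  rewrite Expect_lin, Expect_affine; [reflexivity | apply qf_integrable_affine | exact IP].
Qed.

Lemma agent_cost_ge_sub_mean x : x - mean <= agent_cost x d.
Proof.
  replace (x - mean) with (x + -1 * mean) by ring. rewrite <- Expect_affine.
  apply Expect_le; [apply qf_integrable_affine | apply qf_integrable_abs, increasing_id |].
  intros u _. unfold Rabs; destruct Rcase_abs; lra.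
Qed.

Lemma agent_cost_ge_mean_sub x : mean - x <= agent_cost x d.
Proof.
  replace (mean - x) with (- x + 1 * mean) by ring. rewrite <- Expect_affine.
  apply Expect_le; [apply qf_integrable_affine | apply qf_integrable_abs, increasing_id |].
  intros u _. unfold Rabs; destruct Rcase_abs; lra.
Qed.

End Expectation.

(** * The layer-cake formula *)

(* Riemann sum with mesh [h] and [n] nodes on each side of [x] for the layer-cake
   formula E|x - Y| = \int_x^oo (1 - F) + \int_-oo^x F, where F is the CDF of Y.
   Only F enters, which is why a distributional identity transfers agent costs. *)
Fixpoint layer_sum (x h : R) (F : R -> R) (n : nat) : R :=
  match n with
  | O => 0
  | S k => layer_sum x h F k + h * (1 - F (x + INR k * h) + F (x - INR k * h))
  end.

Definition point_cdf (y t : R) : R := indicator (fun z => z <= t) y.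

Lemma layer_sum_point_cdf_bounds x h y n : 0 < h ->
  Rmin (Rabs (x - y)) (INR n * h) <= layer_sum x h (point_cdf y) n <= INR n * h /\
  layer_sum x h (point_cdf y) n <= Rabs (x - y) + h.
Proof.
  intros Hh. induction n as [|n IH]; simpl layer_sum.
  - simpl INR. pose proof (Rabs_pos (x - y)). unfold Rmin; destruct Rle_dec; lra.
  - rewrite S_INR. pose proof (pos_INR n). unfold point_cdf, indicator in *.
    destruct (excluded_middle_informative (y <= x + INR n * h)),
      (excluded_middle_informative (y <= x - INR n * h));
      unfold Rmin, Rabs in *; repeat destruct Rle_dec; repeat destruct Rcase_abs; nra.
Qed.

Lemma layer_sum_point_cdf_approx x h y n : 0 < h -> Rabs (x - y) <= INR n * h ->
  Rabs (x - y) <= layer_sum x h (point_cdf y) n <= Rabs (x - y) + h.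
Proof.
  intros Hh Hn. destruct (layer_sum_point_cdf_bounds x h y n Hh) as [[Hlow _] Hup].
  rewrite Rmin_left in Hlow by assumption. lra.
Qed.

Section LayerCake.

Variables (d : dist) (x h : R) (psi : R -> R).
Hypothesis psi_increasing : increasing psi.

Lemma layer_term_integrable k :
  qf_integrable d
    (fun y => 1 - point_cdf (psi y) (x + INR k * h) + point_cdf (psi y) (x - INR k * h)).
Proof.
  apply qf_integrable_ext with (fun y =>
    (1 + -1 * point_cdf (psi y) (x + INR k * h)) + 1 * point_cdf (psi y) (x - INR k * h)).
  - intros y. ring.
  - repeat apply qf_integrable_lin;
      solve [apply qf_integrable_const | apply qf_integrable_indicator_le, psi_increasing].
Qed.

Lemma Expect_layer_term k :
  Expect d (fun y => 1 - point_cdf (psi y) (x + INR k * h) + point_cdf (psi y) (x - INR k * h)) =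
  1 - Prob d (fun y => psi y <= x + INR k * h) + Prob d (fun y => psi y <= x - INR k * h).
Proof.
  assert (I1 := qf_integrable_indicator_le d (x + INR k * h) psi psi_increasing).
  assert (I2 := qf_integrable_indicator_le d (x - INR k * h) psi psi_increasing).
  transitivity (Expect d (fun y =>
    (1 + -1 * point_cdf (psi y) (x + INR k * h)) + 1 * point_cdf (psi y) (x - INR k * h))).
  { unfold Expect. f_equal. extensionality u. ring. }
  rewrite !Expect_lin, Expect_const;
    [unfold Prob, point_cdf, indicator; ring | apply qf_integrable_const | exact I1
    | apply qf_integrable_lin; [apply qf_integrable_const | exact I1] | exact I2].
Qed.

Lemma qf_integrable_layer_sum n :
  qf_integrable d (fun y => layer_sum x h (point_cdf (psi y)) n).
Proof.
  induction n as [|n IH]; simpl.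
  - apply qf_integrable_const.
  - apply qf_integrable_lin; [exact IH | apply layer_term_integrable].
Qed.

Lemma Expect_layer_sum n :
  Expect d (fun y => layer_sum x h (point_cdf (psi y)) n) =
  layer_sum x h (fun t => Prob d (fun y => psi y <= t)) n.
Proof.
  induction n as [|n IH]; simpl.
  - apply Expect_const.
  - rewrite Expect_lin, IH, Expect_layer_term;
      [reflexivity | apply qf_integrable_layer_sum | apply layer_term_integrable].
Qed.

Lemma Expect_abs_layer_sum : 0 < h -> exists N, forall n, (N <= n)%nat ->
  Expect d (fun y => Rabs (x - psi y)) <= layer_sum x h (fun t => Prob d (fun y => psi y <= t)) n
    <= Expect d (fun y => Rabs (x - psi y)) + h.
Proof.
  intros Hh.
  destruct (INR_archimed h (Rabs (x - psi (qf d 0)) + Rabs (x - psi (qf d 1))) Hh) as [N HN].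
  exists N. intros n Hn.
  assert (Hrange : forall u, 0 < u < 1 -> Rabs (x - psi (qf d u)) <= INR n * h).
  { intros u Hu.
    assert (psi (qf d 0) <= psi (qf d u)) by (apply psi_increasing, qf_mono; lra).
    assert (psi (qf d u) <= psi (qf d 1)) by (apply psi_increasing, qf_mono; lra).
    assert (INR N <= INR n) by (apply le_INR; exact Hn).
    unfold Rabs in *; repeat destruct Rcase_abs; nra. }
  assert (Iabs := qf_integrable_abs d x psi psi_increasing).
  rewrite <- Expect_layer_sum. split.
  - apply Expect_le; [exact Iabs | apply qf_integrable_layer_sum |].
    intros u Hu. apply layer_sum_point_cdf_approx; auto.
  - apply Rle_trans with (Expect d (fun y => Rabs (x - psi y) + h * 1)).
    + apply Expect_le; [apply qf_integrable_layer_sum | apply qf_integrable_lin;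
                        [exact Iabs | apply qf_integrable_const] |].
      intros u Hu. rewrite Rmult_1_r. apply layer_sum_point_cdf_approx; auto.
    + rewrite Expect_lin, Expect_const by (exact Iabs || apply qf_integrable_const). lra.
Qed.

End LayerCake.

Lemma agent_cost_distributed_as x d1 d2 phi : increasing phi -> distributed_as d1 phi d2 ->
  agent_cost x d1 = Expect d2 (fun y => Rabs (x - phi y)).
Proof.
  intros Hphi Hdist.
  assert (Close : forall h, 0 < h ->
    agent_cost x d1 <= Expect d2 (fun y => Rabs (x - phi y)) + h /\
    Expect d2 (fun y => Rabs (x - phi y)) <= agent_cost x d1 + h).
  { intros h Hh.
    destruct (Expect_abs_layer_sum d1 x h (fun y => y) increasing_id Hh) as [N1 H1].
    destruct (Expect_abs_layer_sum d2 x h phi Hphi Hh) as [N2 H2].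
    specialize (H1 (max N1 N2) (Nat.le_max_l _ _)).
    specialize (H2 (max N1 N2) (Nat.le_max_r _ _)).
    replace (fun t => Prob d1 (fun y => y <= t)) with (fun t => Prob d2 (fun y => phi y <= t))
      in H1 by (extensionality t; symmetry; apply Hdist).
    unfold agent_cost. lra. }
  apply Rle_antisym; apply Rle_plus_epsilon; intros h Hh;
    destruct (Close h Hh); assumption.
Qed.

(** * The social cost at the profile (0,1) *)

Lemma rpow_nonneg a b : 0 <= rpow a b.
Proof. unfold rpow, Rpower. destruct Rle_dec; [lra | left; apply exp_pos]. Qed.

Lemma rpow_Rpower a b : 0 < a -> rpow a b = Rpower a b.
Proof. intros Ha. unfold rpow. destruct Rle_dec; [lra | reflexivity]. Qed.

Lemma rpow_0_l b : rpow 0 b = 0.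
Proof. unfold rpow. destruct Rle_dec; [reflexivity | lra]. Qed.

Lemma rpow_1_l b : rpow 1 b = 1.
Proof. rewrite rpow_Rpower by lra. unfold Rpower. rewrite ln_1, Rmult_0_r. apply exp_0. Qed.

Lemma rpow_le_compat a b e : 0 <= a <= b -> 0 <= e -> rpow a e <= rpow b e.
Proof.
  intros Hab He. destruct (Req_dec a 0) as [->|Ha].
  - rewrite rpow_0_l. apply rpow_nonneg.
  - rewrite !rpow_Rpower by lra. apply Rle_Rpower_l; lra.
Qed.

Lemma rpow_le_self t p : 0 <= t <= 1 -> 1 <= p -> rpow t p <= t.
Proof.
  intros Ht Hp. destruct (Req_dec t 0) as [->|Ht0]; [rewrite rpow_0_l; lra|].
  rewrite rpow_Rpower by lra. unfold Rpower.
  rewrite <- (exp_ln t) at 2 by lra.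
  assert (ln t <= 0).
  { destruct (Req_dec t 1) as [->|]; [rewrite ln_1; lra|].
    left; rewrite <- ln_1; apply ln_increasing; lra. }
  destruct (Req_dec (p * ln t) (ln t)) as [->|Hne]; [lra | left; apply exp_increasing; nra].
Qed.

Lemma rpow_rpow_inv b p : 0 <= b -> 0 < p -> rpow (rpow b p) (1 / p) = b.
Proof.
  intros Hb Hp. destruct (Req_dec b 0) as [->|Hb0]; [rewrite !rpow_0_l; reflexivity|].
  rewrite (rpow_Rpower b), rpow_Rpower by (unfold Rpower; try apply exp_pos; lra).
  rewrite Rpower_mult. replace (p * (1 / p)) with 1 by (field; lra).
  apply Rpower_1. lra.
Qed.

Definition powsum01 (p y : R) : R := rpow (Rabs y) p + rpow (Rabs (1 - y)) p.

Lemma sc_det_01 p y : sc_det p 0 1 y = rpow (powsum01 p y) (1 / p).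
Proof. unfold sc_det, lpnorm, powsum01. rewrite Rminus_0_l, Rabs_Ropp. reflexivity. Qed.

Lemma powsum01_nonneg p y : 0 <= powsum01 p y.
Proof.
  unfold powsum01. pose proof (rpow_nonneg (Rabs y) p). pose proof (rpow_nonneg (Rabs (1 - y)) p).
  lra.
Qed.

Lemma powsum01_reflect p y : powsum01 p (1 - y) = powsum01 p y.
Proof. unfold powsum01. replace (1 - (1 - y)) with y by ring. ring. Qed.

Lemma powsum01_le_1 p y : 1 <= p -> 0 <= y <= 1 -> powsum01 p y <= 1.
Proof.
  intros Hp Hy. unfold powsum01. rewrite !Rabs_right by lra.
  pose proof (rpow_le_self y p ltac:(lra) Hp). pose proof (rpow_le_self (1 - y) p ltac:(lra) Hp).
  lra.
Qed.

Lemma powsum01_decreasing_nonpos p y y' : 0 < p -> y <= y' -> y' <= 0 ->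
  powsum01 p y' <= powsum01 p y.
Proof.
  intros Hp Hyy' Hy'. unfold powsum01.
  rewrite (Rabs_left1 y), (Rabs_left1 y'), (Rabs_right (1 - y)), (Rabs_right (1 - y')) by lra.
  pose proof (rpow_le_compat (- y') (- y) p ltac:(lra) ltac:(lra)).
  pose proof (rpow_le_compat (1 - y') (1 - y) p ltac:(lra) ltac:(lra)). lra.
Qed.

(* On (0,1/2] the derivative p (s^(p-1) - (1-s)^(p-1)) is nonpositive. *)
Lemma powsum01_decreasing_pos p y y' : 1 <= p -> 0 < y -> y < y' -> y' <= 1/2 ->
  powsum01 p y' <= powsum01 p y.
Proof.
  intros Hp Hy Hyy' Hy'.
  set (g := fun s => Rpower s p + Rpower (1 - s) p).
  set (g' := fun s => p * Rpower s (p - 1) + p * Rpower (1 - s) (p - 1) * (-1)).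
  assert (Hderiv : forall c, y <= c <= y' -> derivable_pt_lim g c (g' c)).
  { intros c Hc. apply (derivable_pt_lim_plus (fun s => Rpower s p) (fun s => Rpower (1 - s) p)).
    - apply derivable_pt_lim_power; lra.
    - apply (derivable_pt_lim_comp (fun s => 1 - s) (fun s => Rpower s p)).
      + replace (-1) with (0 - 1) by ring.
        apply (derivable_pt_lim_minus (fct_cte 1) id);
          [apply derivable_pt_lim_const | apply derivable_pt_lim_id].
      + apply derivable_pt_lim_power; lra. }
  destruct (MVT_cor2 g g' y y' Hyy' Hderiv) as [c [Hmvt Hc]].
  assert (Eg : forall s, 0 < s <= 1/2 -> powsum01 p s = g s).
  { intros s Hs. unfold powsum01, g. rewrite !Rabs_right, !rpow_Rpower by lra. reflexivity. }
  rewrite !Eg by lra.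
  assert (Rpower c (p - 1) <= Rpower (1 - c) (p - 1)) by (apply Rle_Rpower_l; lra).
  assert (g' c <= 0) by (unfold g'; nra).
  nra.
Qed.

Lemma powsum01_decreasing p y y' : 1 <= p -> y <= y' -> y' <= 1/2 -> powsum01 p y' <= powsum01 p y.
Proof.
  intros Hp Hyy' Hy'.
  destruct (Rle_dec y' 0); [apply powsum01_decreasing_nonpos; lra|].
  destruct (Rle_dec y 0).
  - assert (powsum01 p 0 = 1)
      by (unfold powsum01; rewrite Rabs_R0, Rminus_0_r, Rabs_R1, rpow_0_l, rpow_1_l; ring).
    pose proof (powsum01_le_1 p y' Hp ltac:(lra)).
    pose proof (powsum01_decreasing_nonpos p y 0 ltac:(lra) ltac:(lra) ltac:(lra)). lra.
  - destruct (Req_dec y y') as [<-|Hne]; [lra|]. apply powsum01_decreasing_pos; lra.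
Qed.

Lemma sc_det_01_decreasing p y y' : 1 <= p -> y <= y' -> y' <= 1/2 ->
  sc_det p 0 1 y' <= sc_det p 0 1 y.
Proof.
  intros. rewrite !sc_det_01. apply rpow_le_compat.
  - split; [apply powsum01_nonneg | apply powsum01_decreasing; assumption].
  - unfold Rdiv. rewrite Rmult_1_l. left; apply Rinv_0_lt_compat; lra.
Qed.

Lemma sc_det_01_increasing p y y' : 1 <= p -> 1/2 <= y -> y <= y' ->
  sc_det p 0 1 y <= sc_det p 0 1 y'.
Proof.
  intros. rewrite !sc_det_01, <- (powsum01_reflect p y), <- (powsum01_reflect p y'), <- !sc_det_01.
  apply sc_det_01_decreasing; lra.
Qed.

Lemma sc_det_01_min p z : 1 <= p -> sc_det p 0 1 (1/2) <= sc_det p 0 1 z.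
Proof.
  intros Hp. destruct (Rle_dec z (1/2)).
  - apply sc_det_01_decreasing; lra.
  - apply sc_det_01_increasing; lra.
Qed.

Lemma sc_det_01_outside p y : 1 <= p -> y <= 0 \/ 1 <= y -> 1 <= sc_det p 0 1 y.
Proof.
  intros Hp Hy. rewrite sc_det_01.
  assert (Hinv : 0 <= 1 / p) by (unfold Rdiv; rewrite Rmult_1_l; left; apply Rinv_0_lt_compat; lra).
  pose proof (rpow_nonneg (Rabs y) p). pose proof (rpow_nonneg (Rabs (1 - y)) p).
  destruct Hy as [Hy|Hy].
  - apply Rle_trans with (Rabs (1 - y)); [rewrite Rabs_right; lra|].
    rewrite <- (rpow_rpow_inv (Rabs (1 - y)) p) at 1 by (try apply Rabs_pos; lra).
    apply rpow_le_compat; [unfold powsum01; lra | assumption].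
  - apply Rle_trans with (Rabs y); [rewrite Rabs_right; lra|].
    rewrite <- (rpow_rpow_inv (Rabs y) p) at 1 by (try apply Rabs_pos; lra).
    apply rpow_le_compat; [unfold powsum01; lra | assumption].
Qed.

Lemma sc_det_01_half p : 0 < p -> sc_det p 0 1 (1/2) * Rpower 2 (1 - 1 / p) = 1.
Proof.
  intros Hp. rewrite sc_det_01. unfold powsum01.
  replace (1 - 1/2) with (1/2) by field. rewrite Rabs_right, (rpow_Rpower (1/2) p) by lra.
  assert (Hpos : 0 < Rpower (1/2) p + Rpower (1/2) p)
    by (unfold Rpower; pose proof (exp_pos (p * ln (1/2))); lra).
  rewrite rpow_Rpower by exact Hpos.
  unfold Rpower. rewrite <- exp_plus.
  replace (exp (p * ln (1 / 2)) + exp (p * ln (1 / 2))) with (2 * exp (p * ln (1 / 2))) by ring.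
  rewrite ln_mult, ln_exp by (lra || apply exp_pos).
  replace (1/2) with (/2) by field. rewrite ln_Rinv by lra.
  replace (1 / p * (ln 2 + p * - ln 2) + (1 - 1 / p) * ln 2) with 0 by (field; lra).
  apply exp_0.
Qed.

Lemma opt_01 p : 1 <= p -> opt p 0 1 = sc_det p 0 1 (1/2).
Proof.
  intros Hp. unfold opt.
  destruct (epsilon_spec (inhabits 0)
    (fun m => (exists y, sc_det p 0 1 y = m) /\ forall z, m <= sc_det p 0 1 z))
    as [[y <-] Hmin].
  { exists (sc_det p 0 1 (1/2)). split; [exists (1/2); reflexivity|].
    intros z. apply sc_det_01_min, Hp. }
  apply Rle_antisym; [apply Hmin | apply sc_det_01_min, Hp].
Qed.

Lemma qf_integrable_sc_det_01 d p : 1 <= p -> qf_integrable d (sc_det p 0 1).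
Proof.
  intros Hp.
  apply (qf_integrable_monotone_sum d _ (fun y => sc_det p 0 1 (Rmax y (1/2)))
    (fun y => sc_det p 0 1 (Rmin y (1/2)) - sc_det p 0 1 (1/2))).
  - intros x y Hxy. apply sc_det_01_increasing; [assumption | apply Rmax_r |].
    unfold Rmax; repeat destruct Rle_dec; lra.
  - intros x y Hxy. enough (sc_det p 0 1 (Rmin y (1/2)) <= sc_det p 0 1 (Rmin x (1/2))) by lra.
    apply sc_det_01_decreasing; [assumption | | apply Rmin_r].
    unfold Rmin; repeat destruct Rle_dec; lra.
  - intros y. unfold Rmax, Rmin. destruct (Rle_dec y (1/2)), (Rle_dec (1/2) y); ring.
Qed.

(** * The lower bound *)

Lemma distributed_as_shift_comp d1 d2 d3 a k :
  distributed_as d1 (fun y => y + a) d2 -> distributed_as d2 k d3 ->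
  distributed_as d1 (fun y => k y + a) d3.
Proof.
  intros H12 H23 t. rewrite H12, (Prob_ext d2 _ (fun y => y <= t - a)) by (intros; lra).
  rewrite H23. apply Prob_ext. intros; lra.
Qed.

Section UnitInterval.

Variables (d : dist) (e : R).
Hypothesis d_supported : supported_in d 0 1.
Hypothesis e_pos : 0 < e.

Lemma Expect_abs_scaled_le :
  Expect d (fun y => Rabs (1 - (1 + e) * y)) <=
  1 - (1 + e) * mean d + 2 * e * Prob d (fun y => 1 - e <= y).
Proof.
  replace (1 - (1 + e) * mean d) with (1 + - (1 + e) * mean d) by ring.
  rewrite <- Expect_affine_indicator by apply qf_integrable_indicator_ge.
  (* 1 - (1 + e) y < 0 forces y > 1 - e, and then y <= 1 bounds the overshoot by 2 e. *)
  apply (Expect_le_on_support d 0 1); [assumption | | |].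
  - apply qf_integrable_abs. intros a b H. nra.
  - apply qf_integrable_lin; [apply qf_integrable_affine | apply qf_integrable_indicator_ge].
  - intros y Hy. unfold indicator. destruct excluded_middle_informative;
      unfold Rabs; destruct Rcase_abs; nra.
Qed.

Lemma Expect_abs_shifted_le :
  Expect d (fun y => Rabs (0 - ((1 + e) * y + - e))) <=
  - e + (1 + e) * mean d + 2 * e * Prob d (fun y => y <= e).
Proof.
  rewrite <- Expect_affine_indicator
    by apply (qf_integrable_indicator_le d e (fun y => y)), increasing_id.
  (* (1 + e) y - e < 0 forces y < e, and then y >= 0 bounds the overshoot by 2 e. *)
  apply (Expect_le_on_support d 0 1); [assumption | | |].
  - apply qf_integrable_abs. intros a b H. nra.
  - apply qf_integrable_lin; [apply qf_integrable_affine|].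
    apply (qf_integrable_indicator_le d e (fun y => y)), increasing_id.
  - intros y Hy. unfold indicator. destruct excluded_middle_informative;
      unfold Rabs; destruct Rcase_abs; nra.
Qed.

End UnitInterval.

Section LowerBound.

Variable f : mechanism.
Hypothesis f_strategyproof : strategyproof f.
Hypothesis f_shift_scale_invariant : shift_scale_invariant f.
Hypothesis f_symmetric : symmetric f.
Hypothesis f_interval : forall x1 x2, Prob (f x1 x2) (fun y => Rmin x1 x2 <= y <= Rmax x1 x2) = 1.

Lemma supported_01 : supported_in (f 0 1) 0 1.
Proof.
  apply supported_in_of_Prob; [lra|].
  pose proof (f_interval 0 1) as H01. rewrite Rmin_left, Rmax_right in H01 by lra. exact H01.
Qed.

Lemma Prob_reflect s : Prob (f 0 1) (fun y => 1 - s <= y) = Prob (f 0 1) (fun y => y <= s).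
Proof.
  rewrite (Prob_ext _ _ (fun z => (0 + 1) / 2 + (1 / 2 - s) <= z)) by (intros; lra).
  rewrite f_symmetric. apply Prob_ext. intros; lra.
Qed.

Lemma distributed_as_scaled e : 0 < e ->
  distributed_as (f 0 (1 + e)) (fun y => (1 + e) * y) (f 0 1).
Proof.
  intros He. destruct (f_shift_scale_invariant 0 1 (1 + e) ltac:(lra)) as [_ [Hscale _]].
  rewrite Rmult_0_r, Rmult_1_r in Hscale. apply Hscale. lra.
Qed.

Lemma distributed_as_shifted e : 0 < e ->
  distributed_as (f (- e) 1) (fun y => (1 + e) * y + - e) (f 0 1).
Proof.
  intros He. destruct (f_shift_scale_invariant 0 (1 + e) (- e) ltac:(lra)) as [Hshift _].
  replace (0 + - e) with (- e) in Hshift by ring.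
  replace (1 + e + - e) with 1 in Hshift by ring.
  exact (distributed_as_shift_comp _ _ _ _ _ Hshift (distributed_as_scaled e He)).
Qed.

(* Agent 2 at 1 must not gain by reporting 1 + e. *)
Lemma mean_le_twice_mass_above e : 0 < e -> mean (f 0 1) <= 2 * Prob (f 0 1) (fun y => 1 - e <= y).
Proof.
  intros He.
  assert (Hdev : agent_cost 1 (f 0 1) <= Expect (f 0 1) (fun y => Rabs (1 - (1 + e) * y))).
  { rewrite <- (agent_cost_distributed_as 1 (f 0 (1 + e)) (f 0 1) (fun y => (1 + e) * y)).
    - apply (proj2 f_strategyproof).
    - intros a b H. nra.
    - apply distributed_as_scaled, He. }
  pose proof (agent_cost_ge_sub_mean (f 0 1) 1).
  pose proof (Expect_abs_scaled_le (f 0 1) e supported_01 He).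
  apply Rmult_le_reg_l with e; [assumption|]. nra.
Qed.

(* Agent 1 at 0 must not gain by reporting - e. *)
Lemma one_le_mean_plus_twice_mass_below e : 0 < e ->
  1 <= mean (f 0 1) + 2 * Prob (f 0 1) (fun y => y <= e).
Proof.
  intros He.
  assert (Hdev : agent_cost 0 (f 0 1) <= Expect (f 0 1) (fun y => Rabs (0 - ((1 + e) * y + - e)))).
  { rewrite <- (agent_cost_distributed_as 0 (f (- e) 1) (f 0 1) (fun y => (1 + e) * y + - e)).
    - apply (proj1 f_strategyproof).
    - intros a b H. nra.
    - apply distributed_as_shifted, He. }
  pose proof (agent_cost_ge_mean_sub (f 0 1) 0).
  pose proof (Expect_abs_shifted_le (f 0 1) e supported_01 He).
  apply Rmult_le_reg_l with e; [assumption|]. nra.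
Qed.

Lemma quarter_le_mass_below e : 0 < e -> 1 / 4 <= Prob (f 0 1) (fun y => y <= e).
Proof.
  intros He.
  pose proof (mean_le_twice_mass_above e He). pose proof (one_le_mean_plus_twice_mass_below e He).
  rewrite Prob_reflect in *. lra.
Qed.

Lemma qf_nonpos_first_quarter u : 0 < u < 1 / 4 -> qf (f 0 1) u <= 0.
Proof.
  intros Hu. destruct (Rle_dec (qf (f 0 1) u) 0) as [|Hpos]; [assumption|].
  set (e := qf (f 0 1) u / 2).
  enough (Prob (f 0 1) (fun y => y <= e) <= u)
    by (pose proof (quarter_le_mass_below e ltac:(unfold e; lra)); lra).
  apply Expect_le_of_nonpos_above; [| lra | apply indicator_01 |].
  - apply (qf_integrable_indicator_le _ e (fun y => y)), increasing_id.
  - intros y Hy. unfold indicator, e in *. destruct excluded_middle_informative; lra.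
Qed.

Lemma qf_ge_1_last_quarter u : 3 / 4 < u < 1 -> 1 <= qf (f 0 1) u.
Proof.
  intros Hu. destruct (Rle_dec 1 (qf (f 0 1) u)) as [|Hlt]; [assumption|].
  set (e := (1 - qf (f 0 1) u) / 2).
  enough (Prob (f 0 1) (fun y => 1 - e <= y) <= 1 - u)
    by (pose proof (quarter_le_mass_below e ltac:(unfold e; lra));
        rewrite <- Prob_reflect in *; lra).
  apply Expect_le_of_nonpos_below; [apply qf_integrable_indicator_ge | lra | apply indicator_01 |].
  intros y Hy. unfold indicator, e in *. destruct excluded_middle_informative; lra.
Qed.

Lemma sc_01_ge p : 1 <= p -> (1 + sc_det p 0 1 (1 / 2)) / 2 <= sc p 0 1 (f 0 1).
Proof.
  intros Hp.
  apply Rle_trans with (1 * (1 / 4) + sc_det p 0 1 (1 / 2) * (3 / 4 - 1 / 4) + 1 * (1 - 3 / 4));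
    [lra|].
  apply Rint01_ge_piecewise; [apply qf_integrable_sc_det_01, Hp | lra | lra | lra | | |];
    intros u Hu.
  - apply sc_det_01_outside; [assumption | left; apply qf_nonpos_first_quarter; lra].
  - apply sc_det_01_min, Hp.
  - apply sc_det_01_outside; [assumption | right; apply qf_ge_1_last_quarter; lra].
Qed.

End LowerBound.

Theorem mainTheorem14 (p : R) (hp : 1 <= p) (f : mechanism) :
  strategyproof f ->
  shift_scale_invariant f ->
  symmetric f ->
  (forall x1 x2, Prob (f x1 x2) (fun y => Rmin x1 x2 <= y <= Rmax x1 x2) = 1) ->
  approx_ratio_ge p f ((Rpower 2 (1 - 1 / p) + 1) / 2).
Proof.
  intros SP SSI SYM INT c' Hc'. exists 0, 1.
  assert (Hsc := sc_01_ge f SP SSI SYM INT p hp).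
  assert (Hhalf := sc_det_01_half p ltac:(lra)).
  assert (Hpow : 0 < Rpower 2 (1 - 1 / p)) by apply exp_pos.
  unfold ratio_exceeds. cbv zeta. rewrite opt_01 by exact hp.
  set (o := sc_det p 0 1 (1 / 2)) in *.
  set (s := sc p 0 1 (f 0 1)) in *.
  destruct (Req_dec_T o 0) as [Ho|Ho]; [rewrite Ho in Hhalf; lra|].
  assert (o_pos : 0 < o) by nra.
  apply Rlt_le_trans with ((Rpower 2 (1 - 1 / p) + 1) / 2); [exact Hc'|].
  apply Rmult_le_reg_r with o; [exact o_pos|].
  replace (s / o * o) with s by (field; lra). nra.
Qed.
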